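(* Let $A,B\in\mathcal{F}_k$ be commonly ordered configurations of $k$ robots. There exists a feasible schedule from $A$ to $B$ with makespan $d(A,B)$ in which each robot makes at most one turn.
   Context: Robots are axis-parallel unit squares: a robot at $p$ occupies $p+\boxdot$, $\boxdot=\{q:\|q\|_\infty\le1/2\}$. Distances use the $L_1$ norm $\|p\|=|x(p)|+|y(p)|$. A configuration of $k$ robots is a tuple $(p_1,\dots,p_k)$ with $\|p_i-p_j\|_\infty\ge 1$ for $i\ne j$; $\mathcal{F}_k$ is their set. A trajectory from $a$ to $b$ over $T=[t_0,t_1]$ is a $1$-Lipschitz (w.r.t. $L_1$) map $m:T\to\mathbb{R}^2$, $m(t_0)=a$, $m(t_1)=b$, whose image is a polygonal chain; a turn is a point of the image where two segments of different orientations meet. A schedule $M=(m_1,\dots,m_k)$ over $T$ is feasible if $M(t)\in\mathcal{F}_k$ for all $t$; its makespan is $t_1-t_0$. The diameter is $d(A,B)=\max_i\|a_i-b_i\|$. An ordering of $k$ robots assigns to each pair $i<j$ one of the four relations $x(p_i)\ge x(p_j)+1$, $x(p_j)\ge x(p_i)+1$, $y(p_i)\ge y(p_j)+1$, $y(p_j)\ge y(p_i)+1$; a configuration lies in the ordering if it satisfies all the assigned relations. Two configurations are commonly ordered if they lie in a common ordering. *)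

From Stdlib Require Import Reals List Lra.
Open Scope R_scope.

Definition pt := (R * R)%type.

Definition psub (p q : pt) : pt := (fst p - fst q, snd p - snd q).

Definition norm1 (p : pt) : R := Rabs (fst p) + Rabs (snd p).

Definition normInf (p : pt) : R := Rmax (Rabs (fst p)) (Rabs (snd p)).

(* A configuration of k robots: robots are indexed by i < k. *)
Definition config := nat -> pt.

Definition in_Fk (k : nat) (P : config) : Prop :=
  forall i j, (i < k)%nat -> (j < k)%nat -> i <> j -> normInf (psub (P i) (P j)) >= 1.

Definition diam (k : nat) (A B : config) : R :=
  fold_right Rmax 0 (map (fun i => norm1 (psub (A i) (B i))) (seq 0 k)).

Inductive rel4 := XiGe | XjGe | YiGe | YjGe.

Definition rel4_holds (r : rel4) (pi pj : pt) : Prop :=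
  match r with
  | XiGe => fst pi >= fst pj + 1
  | XjGe => fst pj >= fst pi + 1
  | YiGe => snd pi >= snd pj + 1
  | YjGe => snd pj >= snd pi + 1
  end.

Definition ordering := nat -> nat -> rel4.

Definition lies_in (k : nat) (o : ordering) (P : config) : Prop :=
  forall i j, (i < j)%nat -> (j < k)%nat -> rel4_holds (o i j) (P i) (P j).

Definition commonly_ordered (k : nat) (A B : config) : Prop :=
  exists o : ordering, lies_in k o A /\ lies_in k o B.

Definition seg (a c : pt) (p : pt) : Prop :=
  exists l, 0 <= l <= 1 /\ p = (fst a + l * (fst c - fst a), snd a + l * (snd c - snd a)).

Definition trajectory (m : R -> pt) (t0 t1 : R) (a b : pt) : Prop :=
  t0 <= t1 /\
  (forall s t, t0 <= s <= t1 -> t0 <= t <= t1 -> norm1 (psub (m s) (m t)) <= Rabs (s - t)) /\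
  m t0 = a /\ m t1 = b.

(* The image of m over [t0,t1] is a polygonal chain from a to b with at most
   one turn, i.e. the union of the segments [a,c] and [c,b] for some c. *)
Definition at_most_one_turn (m : R -> pt) (t0 t1 : R) (a b : pt) : Prop :=
  exists c : pt, forall p : pt,
    (exists t, t0 <= t <= t1 /\ m t = p) <-> (seg a c p \/ seg c b p).

Definition feasible (k : nat) (M : nat -> R -> pt) (t0 t1 : R) : Prop :=
  forall t, t0 <= t <= t1 -> in_Fk k (fun i => M i t).

(* Move every robot along the straight segment from a_i to b_i, all robots
   sharing the parameter t / d(A,B): each robot then needs time at most
   d(A,B) and makes no turn at all.  Every relation of an ordering is a
   linear inequality between two positions, so it survives the simultaneous
   interpolation of A and B; every intermediate configuration therefore lies
   in the common ordering, and in particular in F_k. *)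
From Stdlib Require Import Reals List Lra Lia.
Open Scope R_scope.

Definition lerp (a b : pt) (l : R) : pt :=
  (fst a + l * (fst b - fst a), snd a + l * (snd b - snd a)).

Lemma lerp0 (a b : pt) : lerp a b 0 = a.
Proof. destruct a; unfold lerp; simpl; f_equal; ring. Qed.

Lemma lerp_same (a : pt) (l : R) : lerp a a l = a.
Proof. destruct a; unfold lerp; simpl; f_equal; ring. Qed.

Lemma seg_lerp (a b : pt) (p : pt) :
  seg a b p <-> exists l, 0 <= l <= 1 /\ p = lerp a b l.
Proof. reflexivity. Qed.

Lemma norm1_ge0 (p : pt) : 0 <= norm1 p.
Proof. unfold norm1; pose proof (Rabs_pos (fst p)); pose proof (Rabs_pos (snd p)); lra. Qed.

Lemma norm1_psub_le0 (a b : pt) : norm1 (psub a b) <= 0 -> a = b.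
Proof.
  destruct a as [a1 a2], b as [b1 b2]; unfold norm1, psub; simpl; intros H.
  unfold Rabs in H; destruct (Rcase_abs (a1 - b1)), (Rcase_abs (a2 - b2));
    f_equal; lra.
Qed.

Lemma norm1_psub_lerp (a b : pt) (s t : R) :
  norm1 (psub (lerp a b s) (lerp a b t)) = Rabs (s - t) * norm1 (psub a b).
Proof.
  unfold norm1, psub, lerp; simpl.
  replace (fst a + s * (fst b - fst a) - (fst a + t * (fst b - fst a)))
    with ((s - t) * (fst b - fst a)) by ring.
  replace (snd a + s * (snd b - snd a) - (snd a + t * (snd b - snd a)))
    with ((s - t) * (snd b - snd a)) by ring.
  rewrite !Rabs_mult, (Rabs_minus_sym (fst b)), (Rabs_minus_sym (snd b)); ring.
Qed.

Lemma norm1_le_diam (k : nat) (A B : config) (i : nat) :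
  (i < k)%nat -> norm1 (psub (A i) (B i)) <= diam k A B.
Proof.
  intros Hi; unfold diam.
  assert (Hin : In (norm1 (psub (A i) (B i)))
                  (map (fun i => norm1 (psub (A i) (B i))) (seq 0 k))).
  { apply in_map_iff; exists i; split; [reflexivity | apply in_seq; lia]. }
  induction (map _ _) as [|x l IH]; simpl in *; [tauto|].
  destruct Hin as [<- | Hin]; [apply Rmax_l |].
  eapply Rle_trans; [exact (IH Hin) | apply Rmax_r].
Qed.

(* For [D = 0] the parameter [t / 0] is [0] in Rocq, so the motion is the
   constant [a]; this is correct because [a = b] in that case. *)
Definition linear_motion (a b : pt) (D : R) (t : R) : pt := lerp a b (t / D).

Lemma div_in_unit (D t : R) : 0 <= t <= D -> 0 <= t / D <= 1.
Proof.
  intros Ht; destruct (Req_dec D 0) as [->|HD].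
  - replace t with 0 by lra; unfold Rdiv; rewrite Rmult_0_l; lra.
  - split.
    + apply Rmult_le_pos; [lra | left; apply Rinv_0_lt_compat; lra].
    + apply Rmult_le_reg_r with D; [lra|].
      unfold Rdiv; rewrite Rmult_assoc, Rinv_l; lra.
Qed.

Section LinearMotion.

Variables (a b : pt) (D : R).
Hypothesis norm1_le_D : norm1 (psub a b) <= D.

Lemma linear_motion_degenerate : D = 0 -> a = b.
Proof. intros HD; apply norm1_psub_le0; lra. Qed.

Lemma trajectory_linear_motion : trajectory (linear_motion a b D) 0 D a b.
Proof.
  pose proof (norm1_ge0 (psub a b)) as Hab0.
  unfold trajectory, linear_motion; split; [lra|]; split; [|split].
  - intros s t _ _; rewrite norm1_psub_lerp.
    pose proof (Rabs_pos (s - t)).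
    destruct (Req_dec D 0) as [HD|HD].
    + replace (norm1 (psub a b)) with 0 by lra; lra.
    + replace (s / D - t / D) with ((s - t) / D) by (field; exact HD).
      unfold Rdiv; rewrite Rabs_mult, (Rabs_right (/ D))
        by (left; apply Rinv_0_lt_compat; lra).
      apply Rmult_le_reg_l with D; [lra|].
      replace (D * (Rabs (s - t) * / D * norm1 (psub a b)))
        with (Rabs (s - t) * norm1 (psub a b)) by (field; exact HD).
      nra.
  - unfold Rdiv; rewrite Rmult_0_l; apply lerp0.
  - destruct (Req_dec D 0) as [HD|HD].
    + rewrite <- (linear_motion_degenerate HD); apply lerp_same.
    + unfold Rdiv; rewrite Rinv_r by exact HD.
      destruct b; unfold lerp; simpl; f_equal; ring.
Qed.

Lemma image_linear_motion (p : pt) :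
  (exists t, 0 <= t <= D /\ linear_motion a b D t = p) <-> seg a b p.
Proof.
  rewrite seg_lerp; split.
  - intros [t [Ht <-]]; exists (t / D); split; [apply div_in_unit|]; auto.
  - intros [l [Hl ->]].
    pose proof (norm1_ge0 (psub a b)).
    destruct (Req_dec D 0) as [HD|HD].
    + exists 0; split; [lra|].
      unfold linear_motion; rewrite <- (linear_motion_degenerate HD), !lerp_same; reflexivity.
    + exists (l * D); split; [nra|].
      unfold linear_motion; f_equal; field; exact HD.
Qed.

(* The turn point is [a] itself: the first leg [a, a] is degenerate. *)
Lemma at_most_one_turn_linear_motion :
  at_most_one_turn (linear_motion a b D) 0 D a b.
Proof.
  exists a; intros p; rewrite image_linear_motion; split; [now right|].
  intros [Hp | Hp]; [|exact Hp].
  destruct (proj1 (seg_lerp _ _ _) Hp) as [l [_ ->]]; rewrite lerp_same.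
  apply seg_lerp; exists 0; split; [lra | now rewrite lerp0].
Qed.

End LinearMotion.

Lemma rel4_holds_lerp (r : rel4) (a1 a2 b1 b2 : pt) (l : R) :
  rel4_holds r a1 a2 -> rel4_holds r b1 b2 -> 0 <= l <= 1 ->
  rel4_holds r (lerp a1 b1 l) (lerp a2 b2 l).
Proof. destruct r; simpl; intros; nra. Qed.

Lemma rel4_holds_normInf (r : rel4) (p q : pt) :
  rel4_holds r p q -> normInf (psub p q) >= 1 /\ normInf (psub q p) >= 1.
Proof.
  unfold normInf, psub; destruct r; simpl; intros H; split; apply Rle_ge;
    first [ eapply Rle_trans; [| apply Rmax_l]; unfold Rabs; destruct Rcase_abs; lra
          | eapply Rle_trans; [| apply Rmax_r]; unfold Rabs; destruct Rcase_abs; lra ].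
Qed.

Lemma lies_in_lerp (k : nat) (o : ordering) (A B : config) (l : R) :
  lies_in k o A -> lies_in k o B -> 0 <= l <= 1 ->
  lies_in k o (fun i => lerp (A i) (B i) l).
Proof. intros HA HB Hl i j Hij Hj; apply rel4_holds_lerp; auto. Qed.

Lemma lies_in_in_Fk (k : nat) (o : ordering) (P : config) :
  lies_in k o P -> in_Fk k P.
Proof.
  intros HP i j Hi Hj Hij.
  destruct (Nat.lt_gt_cases i j) as [[Hlt | Hlt] _]; [exact Hij | |].
  - exact (proj1 (rel4_holds_normInf _ _ _ (HP i j Hlt Hj))).
  - exact (proj2 (rel4_holds_normInf _ _ _ (HP j i Hlt Hi))).
Qed.

Theorem lemma5p2 (k : nat) (A B : config) :
  in_Fk k A -> in_Fk k B -> commonly_ordered k A B ->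
  exists (t0 t1 : R) (M : nat -> R -> pt),
    t1 - t0 = diam k A B /\
    (forall i, (i < k)%nat ->
       trajectory (M i) t0 t1 (A i) (B i) /\ at_most_one_turn (M i) t0 t1 (A i) (B i)) /\
    feasible k M t0 t1.
Proof.
  intros _ _ [o [HA HB]].
  exists 0, (diam k A B), (fun i => linear_motion (A i) (B i) (diam k A B)).
  split; [ring | split].
  - intros i Hi; pose proof (norm1_le_diam k A B i Hi).
    split; [apply trajectory_linear_motion | apply at_most_one_turn_linear_motion]; auto.
  - intros t Ht; apply (lies_in_in_Fk k o), lies_in_lerp; auto.
    apply div_in_unit; exact Ht.
Qed.
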